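(* Let $G+v$ be a graph with an isolated vertex $v$, and let $G$ be the graph obtained from $G+v$ by deleting $v$. Then $\lfloor \mathrm{sp}\rfloor(G+v)=\lfloor \mathrm{sp}\rfloor(G)$. Moreover, if $G$ is a minor of a graph $H$ and $\lfloor \mathrm{sp}\rfloor(G)=\mathrm{sp}(H)$, then there is a graph $H^+$, with exactly one more vertex than $H$, such that $\lfloor \mathrm{sp}\rfloor(G+v)=\mathrm{sp}(H^+)$ and $G+v$ is a minor of $H^+$.
   Context: All graphs are finite, have at least one vertex, have no loops, and may have multiple (parallel) edges. A unique shortest path is a shortest $u$–$v$ path $P$ such that every $u$–$v$ path with the same number of vertices is identical to $P$, where two paths with different edge sequences are different even if their vertex sequences agree; a single vertex is a unique shortest path. The parade number $\mathrm{usp}(G)$ is the largest number of vertices of a unique shortest path in $G$. The spectator number is $\mathrm{sp}(G)=|V(G)|-\mathrm{usp}(G)$. A minor of $H$ is any graph obtained from $H$ by a sequence of: deleting an isolated vertex, deleting an edge, contracting an edge that has no edge parallel to it. The spectator floor $\lfloor \mathrm{sp}\rfloor(G)$ is the minimum of $\mathrm{sp}(H)$ over all graphs $H$ of which $G$ is a minor. *)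

From mathcomp Require Import all_boot.
From mathcomp Require Import boolp.

Set Implicit Arguments.
Unset Strict Implicit.
Unset Printing Implicit Defensive.

(* A finite multigraph without loops: vertices are 0, ..., nv-1; edges are
   listed in [edges], an edge being identified by its POSITION in the list
   (so parallel edges are distinct edges). An edge (a,b) is unordered. *)
Record graph := Graph { nv : nat; edges : seq (nat * nat) }.

Definition wf (G : graph) : bool :=
  (0 < nv G) &&
  all (fun e : nat * nat => [&& e.1 < nv G, e.2 < nv G & e.1 != e.2]) (edges G).

Definition edge_of (G : graph) (i : nat) : nat * nat := nth (0, 0) (edges G) i.

Definition joins (e : nat * nat) (x y : nat) : bool :=
  (e == (x, y)) || (e == (y, x)).

(* A path: a start vertex and a list of steps (edge index, next vertex). *)
Definition gpath := (nat * seq (nat * nat))%type.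

Definition pverts (p : gpath) : seq nat := p.1 :: map snd p.2.
Definition plast (p : gpath) : nat := last p.1 (map snd p.2).
Definition pnv (p : gpath) : nat := (size p.2).+1.

Fixpoint steps_ok (G : graph) (x : nat) (s : seq (nat * nat)) : bool :=
  match s with
  | [::] => true
  | (i, y) :: s' => [&& i < size (edges G), joins (edge_of G i) x y & steps_ok G y s']
  end.

Definition is_path (G : graph) (p : gpath) : bool :=
  [&& all (fun x => x < nv G) (pverts p), uniq (pverts p) & steps_ok G p.1 p.2].

Definition is_usp (G : graph) (p : gpath) : Prop :=
  is_path G p /\
  (forall q, is_path G q -> q.1 = p.1 -> plast q = plast p -> pnv p <= pnv q) /\
  (forall q, is_path G q -> q.1 = p.1 -> plast q = plast p -> pnv q = pnv p -> q = p).

(* parade number: the largest number of vertices of a unique shortest path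
   (a path has at most nv G vertices, hence the bounded max) *)
Definition usp (G : graph) : nat :=
  \max_(k < (nv G).+1 | `[< exists p, is_usp G p /\ pnv p = k >]) k.

Definition sp (G : graph) : nat := nv G - usp G.

(* relabelling after removal of vertex w *)
Definition shift (w x : nat) : nat := if w < x then x.-1 else x.

Definition isolated (G : graph) (w : nat) : bool :=
  all (fun e : nat * nat => (e.1 != w) && (e.2 != w)) (edges G).

Definition del_vertex (G : graph) (w : nat) : graph :=
  Graph (nv G).-1 (map (fun e : nat * nat => (shift w e.1, shift w e.2)) (edges G)).

Definition rem_at (T : Type) (i : nat) (s : seq T) : seq T :=
  take i s ++ drop i.+1 s.

Definition del_edge (G : graph) (i : nat) : graph :=
  Graph (nv G) (rem_at i (edges G)).

Definition no_parallel (G : graph) (i : nat) : bool :=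
  [forall j : 'I_(size (edges G)),
     (val j != i) ==> ~~ joins (edge_of G j) (edge_of G i).1 (edge_of G i).2].

Definition contract (G : graph) (i : nat) : graph :=
  let a := (edge_of G i).1 in
  let b := (edge_of G i).2 in
  let m x := shift b (if x == b then a else x) in
  Graph (nv G).-1 (map (fun e : nat * nat => (m e.1, m e.2)) (rem_at i (edges G))).

Definition unord (e : nat * nat) : nat * nat := (minn e.1 e.2, maxn e.1 e.2).

Definition iso (G H : graph) : Prop :=
  nv G = nv H /\
  exists f : nat -> nat,
    (forall x, x < nv G -> f x < nv H) /\
    {in [pred x | x < nv G] &, injective f} /\
    perm_eq (map (fun e : nat * nat => unord (f e.1, f e.2)) (edges G))
            (map unord (edges H)).

Inductive minor_step : graph -> graph -> Prop :=
  | ms_del_vertex H w : 1 < nv H -> w < nv H -> isolated H w ->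
      minor_step H (del_vertex H w)
  | ms_del_edge H i : i < size (edges H) -> minor_step H (del_edge H i)
  | ms_contract H i : i < size (edges H) -> no_parallel H i ->
      minor_step H (contract H i)
  | ms_iso H G : iso H G -> minor_step H G.

(* minor G H : G is a minor of H *)
Inductive minor : graph -> graph -> Prop :=
  | minor_refl H : minor H H
  | minor_cons G H H' : minor_step H H' -> minor G H' -> minor G H.

(* spectator floor: min of sp H over graphs H having G as a minor.
   G itself is such an H (for wf G), so the minimum is at most sp G,
   hence the bounded min. *)
Definition spfloor (G : graph) : nat :=
  \big[minn/sp G]_(k < (sp G).+1 |
      `[< exists H, wf H /\ minor G H /\ sp H = k >]) (k : nat).

From HB Require Import structures.
From mathcomp Require Import all_boot.
From mathcomp Require Import boolp.
From mathcomp Require Import zify.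

(** Deleting the isolated vertex shows that [G] is a minor of [G+v], so every graph
    having [G+v] as a minor also has [G], and floor(G) <= floor(G+v).  Conversely, let [G]
    be a minor of [H] and let [p] be a longest unique shortest path of [H].  Hang a new
    vertex on the last vertex of [p] by a single edge: every path to the new vertex enters
    it through that edge, so [p] extended by it is still a unique shortest path.  The
    vertex count and the parade number both grow by one, so [sp] does not increase, and
    deleting the new edge leaves [H] plus an isolated vertex, which has [G] plus an
    isolated vertex, i.e. [G+v], as a minor. *)

Set Implicit Arguments.
Unset Strict Implicit.
Unset Printing Implicit Defensive.

Lemma wf_gt0 G : wf G -> 0 < nv G.
Proof. by case/andP. Qed.

Lemma wf_edge G e : wf G -> e \in edges G ->
  [/\ e.1 < nv G, e.2 < nv G & e.1 != e.2].
Proof. by case/andP=> _ /allP h /h /and3P[]. Qed.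

Lemma wf_intro G : 0 < nv G ->
  (forall e, e \in edges G -> [/\ e.1 < nv G, e.2 < nv G & e.1 != e.2]) ->
  wf G.
Proof. by move=> h1 h2; apply/andP; split=> //; apply/allP=> e /h2[*]; apply/and3P. Qed.

Lemma shift_lt w x n : x < n -> x != w -> w < n -> shift w x < n.-1.
Proof. by rewrite /shift; case: ifP => ? ? /eqP ? ?; lia. Qed.

Lemma shift_inj w x y : x != w -> y != w -> shift w x = shift w y -> x = y.
Proof. by rewrite /shift; do 2 case: ifP; move=> ? ? /eqP ? /eqP ?; lia. Qed.

Lemma mem_rem_at (T : eqType) i (s : seq T) x : x \in rem_at i s -> x \in s.
Proof. by rewrite mem_cat => /orP[/mem_take | /mem_drop]. Qed.

Lemma mem_rem_at_nth (T : eqType) i (s : seq T) x0 x :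
  x \in rem_at i s -> exists2 j, j < size s & (j != i) && (nth x0 s j == x).
Proof.
rewrite mem_cat => /orP[] /(nthP x0)[k hk <-].
  have [hki hks] : k < i /\ k < size s.
    by move: hk; rewrite size_take; case: ifP => ? ?; lia.
  by exists k => //; rewrite nth_take // eqxx andbT; lia.
rewrite size_drop in hk.
by exists (i.+1 + k); [lia | rewrite nth_drop eqxx andbT; lia].
Qed.

Lemma wf_del_vertex H w :
  1 < nv H -> w < nv H -> isolated H w -> wf H -> wf (del_vertex H w).
Proof.
move=> h1 hw /allP hiso hwf; apply: wf_intro => /=; first lia.
move=> _ /mapP[[x y] he ->] /=.
have [/= hx hy hxy] := wf_edge hwf he; have /andP[/= hxw hyw] := hiso _ he.
split; try exact: shift_lt.
by apply: contra hxy => /eqP /(shift_inj hxw hyw) ->.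
Qed.

Lemma wf_del_edge H i : wf H -> wf (del_edge H i).
Proof.
move=> hw; apply: wf_intro; first exact: wf_gt0 hw.
by move=> e /mem_rem_at /(wf_edge hw).
Qed.

Lemma wf_contract H i :
  i < size (edges H) -> no_parallel H i -> wf H -> wf (contract H i).
Proof.
move=> hi /forallP noPar hw.
set a := (edge_of H i).1; set b := (edge_of H i).2.
have [ha hb hab] : [/\ a < nv H, b < nv H & a != b].
  by apply: wf_edge hw _; apply: mem_nth.
pose m z := if z == b then a else z.
have m_ok z : z < nv H -> m z < nv H /\ m z != b.
  by rewrite /m; case: eqP => [_ _|/eqP ? ?]; split.
apply: wf_intro => /=; first lia.
move=> _ /mapP[e he ->] /=.
have [j hj /andP[hji /eqP ej]] := mem_rem_at_nth (0, 0) he.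
have [hx hy hxy] := wf_edge hw (mem_rem_at he).
have [hx1 hx2] := m_ok _ hx; have [hy1 hy2] := m_ok _ hy.
have := noPar (Ordinal hj); rewrite /= hji /= -/a -/b /edge_of ej => not_ab.
split; try exact: shift_lt.
(* Merging the endpoints of [e] would need [e] to be parallel to the contracted edge. *)
have m_neq : m e.1 != m e.2.
  move: not_ab hxy; rewrite /m /joins; case: e {he ej hx hy hx1 hx2 hy1 hy2} => x y /=.
  by rewrite !xpair_eqE; case: (x =P b); case: (y =P b) => /= *; subst; lia.
by apply: contra m_neq => /eqP /(shift_inj hx2 hy2) ->.
Qed.

Lemma wf_iso H G : iso H G -> wf H -> wf G.
Proof.
case=> hn [f [hf [finj hp]]] hw.
apply: wf_intro => [|e he]; first by rewrite -hn; apply: wf_gt0.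
have : unord e \in map unord (edges G) by apply: map_f.
rewrite -(perm_mem hp) => /mapP[[x y] hxy] /=.
have [/= hx hy hne] := wf_edge hw hxy.
have fx := hf _ hx; have fy := hf _ hy.
have fne : f x != f y by apply: contra hne => /eqP /(finj _ _ hx hy) ->.
by rewrite /unord => -[? ?]; split; lia.
Qed.

Lemma wf_minor_step H H' : minor_step H H' -> wf H -> wf H'.
Proof.
case=> [K w *|K i _|K i *|K G ?].
- exact: wf_del_vertex.
- exact: wf_del_edge.
- exact: wf_contract.
- exact: wf_iso.
Qed.

Lemma minor_of_step G H : minor_step H G -> minor G H.
Proof. by move=> st; apply: minor_cons st (minor_refl G). Qed.

Lemma minor_trans A B C : minor A B -> minor B C -> minor A C.
Proof.
move=> hAB hBC; elim: hBC hAB => [//| G H H' st _ IH] hAB.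
exact: minor_cons st (IH hAB).
Qed.

Definition add_isolated (H : graph) : graph := Graph (nv H).+1 (edges H).

Lemma iso_add_isolated H G : iso H G -> wf H -> iso (add_isolated H) (add_isolated G).
Proof.
case=> hn [f [hf [finj hp]]] hw; split; first by rewrite /= hn.
pose g x := if x == nv H then nv G else f x.
have g_f x : x < nv H -> g x = f x by rewrite /g => hx; rewrite ifN //; lia.
exists g; split; [|split].
- move=> x /= hx; rewrite /g; case: eqP => [_|/eqP ne]; first lia.
  by have := hf x; lia.
- move=> x y; rewrite !inE /= /g => hx hy.
  case: (x =P nv H) => ex; case: (y =P nv H) => ey.
  + by rewrite ex ey.
  + by have := hf y; lia.
  + by have := hf x; lia.
  + by apply: finj; rewrite inE; lia.
- suff /eq_in_map -> : {in edges H,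
      (fun e => unord (g e.1, g e.2)) =1 (fun e => unord (f e.1, f e.2))} by [].
  by move=> e /(wf_edge hw)[hx hy _]; rewrite /= !g_f.
Qed.

Lemma minor_step_add_isolated H H' :
  minor_step H H' -> wf H -> minor_step (add_isolated H) (add_isolated H').
Proof.
case=> [K w h1 h2 h3|K i h1|K i h1 h2|K G h] hw.
- have -> : add_isolated (del_vertex K w) = del_vertex (add_isolated K) w.
    by rewrite /add_isolated /del_vertex /=; congr Graph; lia.
  by apply: ms_del_vertex => //=; lia.
- exact: ms_del_edge.
- have -> : add_isolated (contract K i) = contract (add_isolated K) i.
    by rewrite /add_isolated /contract /=; congr Graph; have := wf_gt0 hw; lia.
  exact: ms_contract.
- by apply: ms_iso; apply: iso_add_isolated.
Qed.

Lemma minor_add_isolated G H :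
  minor G H -> wf H -> minor (add_isolated G) (add_isolated H).
Proof.
elim=> [K|G' K K' st _ IH] hw; first exact: minor_refl.
exact: minor_cons (minor_step_add_isolated st hw) (IH (wf_minor_step st hw)).
Qed.

Lemma iso_add_isolated_del_vertex G v :
  wf G -> 1 < nv G -> v < nv G -> isolated G v ->
  iso (add_isolated (del_vertex G v)) G.
Proof.
move=> hw h1 hv /allP hiso; split; first by rewrite /=; lia.
pose f x := if x == (nv G).-1 then v else if x < v then x else x.+1.
have f_shift x : x < nv G -> x != v -> f (shift v x) = x.
  by rewrite /shift => ? ?; case: ltnP => ?; rewrite /f; repeat case: ifP => ?; lia.
exists f; split; [|split].
- by move=> x /= hx; rewrite /f; repeat case: ifP => ?; lia.
- by move=> x y; rewrite !inE /= /f => hx hy; repeat case: ifP => ?; lia.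
- rewrite /= -map_comp.
  suff /eq_in_map -> : {in edges G,
      (fun e => unord (f e.1, f e.2)) \o (fun e => (shift v e.1, shift v e.2)) =1 unord}
    by [].
  move=> [x y] he /=.
  have [/= hx hy _] := wf_edge hw he; have /andP[/= hxv hyv] := hiso _ he.
  by rewrite !f_shift.
Qed.

Definition add_pendant (H : graph) (w : nat) : graph :=
  Graph (nv H).+1 (edges H ++ [:: (w, nv H)]).

Lemma wf_add_pendant H w : wf H -> w < nv H -> wf (add_pendant H w).
Proof.
move=> hH hw; apply: wf_intro => //= e; rewrite mem_cat => /orP[/(wf_edge hH)[*]|].
  by split=> //; apply: ltnW.
by rewrite inE => /eqP -> /=; split=> //; [apply: ltnW | rewrite neq_ltn hw].
Qed.

Lemma minor_add_isolated_add_pendant H w : minor (add_isolated H) (add_pendant H w).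
Proof.
have hE : size (edges H) < size (edges (add_pendant H w)) by rewrite size_cat addn1.
apply/minor_of_step; congr minor_step: (ms_del_edge hE).
rewrite /del_edge /add_isolated /rem_at take_size_cat // drop_oversize ?cats0 //.
by rewrite size_cat addn1.
Qed.

Lemma edge_of_add_pendant H w j : j <= size (edges H) ->
  edge_of (add_pendant H w) j = if j == size (edges H) then (w, nv H) else edge_of H j.
Proof.
rewrite /edge_of nth_cat leq_eqVlt => /orP[/eqP ->|hj]; first by rewrite ltnn subnn eqxx.
by rewrite hj ltn_eqF.
Qed.

Lemma steps_ok_cat G x s t :
  steps_ok G x (s ++ t) = steps_ok G x s && steps_ok G (last x (map snd s)) t.
Proof. by elim: s x => [|[i y] s IH] x //=; rewrite IH !andbA. Qed.

Lemma steps_ok_add_pendant H w x s : steps_ok H x s -> steps_ok (add_pendant H w) x s.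
Proof.
elim: s x => [|[i y] s IH] x //= /and3P[hi hj hs]; apply/and3P; split.
- by rewrite size_cat ltn_addr.
- by rewrite edge_of_add_pendant ?ltn_eqF // ltnW.
- exact: IH.
Qed.

Lemma steps_ok_of_add_pendant H w x s : steps_ok (add_pendant H w) x s ->
  all (fun y => y < nv H) (x :: map snd s) -> steps_ok H x s.
Proof.
elim: s x => [|[i y] s IH] x //= /and3P[hi hj hs] /and3P[hx hy hall].
have hiH : i < size (edges H).
  move: hi hj; rewrite size_cat addn1 ltnS leq_eqVlt => /orP[/eqP ei|//].
  by rewrite edge_of_add_pendant ei ?eqxx // /joins !xpair_eqE; lia.
move: hj; rewrite edge_of_add_pendant ?ltn_eqF ?(ltnW hiH) // => hj.
by apply/and3P; split => //; apply: IH => //=; rewrite hy.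
Qed.

Lemma joins_add_pendant_new H w j z : wf H -> j <= size (edges H) -> z < nv H ->
  joins (edge_of (add_pendant H w) j) z (nv H) -> j = size (edges H) /\ z = w.
Proof.
move=> hH hj hz; rewrite edge_of_add_pendant //; case: eqP => [-> | /eqP ne].
  by rewrite /joins !xpair_eqE => /orP[] /andP[/eqP ? /eqP ?]; split; lia.
have /(wf_edge hH) : edge_of H j \in edges H by apply: mem_nth; rewrite ltn_neqAle ne.
case: (edge_of H j) => a b /= [ha hb _].
by rewrite /joins !xpair_eqE => /orP[] /andP[/eqP ? /eqP ?]; lia.
Qed.

Lemma path_add_pendant_to_new H w x s : wf H -> x < nv H ->
  is_path (add_pendant H w) (x, s) -> plast (x, s) = nv H ->
  exists2 s', s = rcons s' (size (edges H), nv H) &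
    is_path H (x, s') /\ plast (x, s') = w.
Proof.
move=> hH hx /and3P[hall huniq hsteps].
case/lastP: s hall huniq hsteps => [|s [j y]] hall huniq hsteps.
  by rewrite /plast /= => ex; rewrite ex ltnn in hx.
rewrite /plast /= map_rcons last_rcons /= => ey; subst y.
move: hall huniq; rewrite /pverts map_rcons -rcons_cons all_rcons rcons_uniq.
move=> /andP[_ hall] /andP[hN huniq].
have hall' : all (fun y => y < nv H) (x :: map snd s).
  apply/allP => y hy; move: (allP hall y hy); rewrite ltnS leq_eqVlt => /orP[/eqP ey|//].
  by rewrite -ey hy in hN.
move: hsteps; rewrite -cats1 steps_ok_cat /= => /andP[hs /and3P[hj hjoin _]].
have hz : last x (map snd s) < nv H by apply: (allP hall'); apply: mem_last.
move: hj; rewrite size_cat addn1 ltnS => hj.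
have [-> ez] := joins_add_pendant_new hH hj hz hjoin.
exists s; rewrite ?cats1 //; split => //.
by apply/and3P; split => //; apply: steps_ok_of_add_pendant hs hall'.
Qed.

Lemma is_usp_add_pendant H p : wf H -> is_usp H p ->
  is_usp (add_pendant H (plast p)) (p.1, rcons p.2 (size (edges H), nv H)).
Proof.
move=> hH [hp [hmin huniq]]; move: (hp) => /and3P[hall hu hs].
have hpN : nv H \notin pverts p by apply/negP => /(allP hall); rewrite ltnn.
have hx : p.1 < nv H by apply: (allP hall); apply: mem_head.
have hlast : plast (p.1, rcons p.2 (size (edges H), nv H)) = nv H.
  by rewrite /plast map_rcons last_rcons.
split; [|split] => [|[x s] hq /= ex|[x s] hq /= ex].
- apply/and3P; split.
  + rewrite /pverts map_rcons -rcons_cons all_rcons /= ltnSn.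
    by apply: sub_all hall => y /= /ltnW.
  + by rewrite /pverts map_rcons -rcons_cons rcons_uniq hpN.
  + rewrite -cats1 steps_ok_cat steps_ok_add_pendant //= size_cat addn1 ltnSn.
    by rewrite edge_of_add_pendant // eqxx /joins eqxx.
- subst x; rewrite hlast => hl.
  have [s' -> [hq' hl']] := path_add_pendant_to_new hH hx hq hl.
  by rewrite /pnv /= !size_rcons ltnS; apply: hmin hq' _ hl'.
- subst x; rewrite hlast => hl.
  have [s' -> [hq' hl']] := path_add_pendant_to_new hH hx hq hl.
  rewrite /pnv /= !size_rcons => -[hsize].
  by have := huniq _ hq' erefl hl'; rewrite /pnv /= hsize => /(_ erefl) <-.
Qed.

Lemma is_path_pnv_le H p : is_path H p -> pnv p <= nv H.
Proof.
case/and3P=> hall hu _.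
have -> : pnv p = size (pverts p) by rewrite /pnv /= size_map.
rewrite -(size_iota 0 (nv H)); apply: uniq_leq_size => // x hx.
by rewrite mem_iota add0n (allP hall).
Qed.

Lemma pnv_le_usp H p : is_usp H p -> pnv p <= usp H.
Proof.
move=> hp; have hn : pnv p < (nv H).+1 by rewrite ltnS is_path_pnv_le //; case: hp.
by apply: (leq_bigmax_cond (Ordinal hn)); apply/asboolP; exists p.
Qed.

Lemma is_usp_vertex H x : x < nv H -> is_usp H (x, [::]).
Proof.
move=> hx; split; first by rewrite /is_path /= hx.
split=> [q _ _ _|[y s] _ /= -> _]; first by [].
by rewrite /pnv; case: s.
Qed.

Lemma usp_attained H : wf H -> exists p, is_usp H p /\ pnv p = usp H.
Proof.
move=> hH; pose A := [pred k : 'I_(nv H).+1 | `[< exists p, is_usp H p /\ pnv p = k >]].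
have hA : 0 < #|A|.
  have h1 : 1 < (nv H).+1 by rewrite ltnS wf_gt0.
  apply/card_gt0P; exists (Ordinal h1); apply/asboolP.
  by exists (0, [::]); split=> //; apply/is_usp_vertex/wf_gt0.
have [k /asboolP[p [hp hk]] husp] := eq_bigmax_cond (fun k : 'I_(nv H).+1 => val k) hA.
by exists p; split => //; rewrite hk; apply: esym.
Qed.

Lemma minor_add_isolated_sp_le G H : wf H -> minor G H ->
  exists Hp, [/\ wf Hp, nv Hp = (nv H).+1, sp Hp <= sp H & minor (add_isolated G) Hp].
Proof.
move=> hH hGH; have [p [hp hpn]] := usp_attained hH.
have hw : plast p < nv H.
  by case/and3P: hp.1 => hall _ _; apply: (allP hall); apply: mem_last.
exists (add_pendant H (plast p)); split => //; first exact: wf_add_pendant.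
  have := pnv_le_usp (is_usp_add_pendant hH hp).
  by rewrite /sp /pnv /= size_rcons -hpn /pnv; lia.
apply: minor_trans (minor_add_isolated hGH hH) _.
exact: minor_add_isolated_add_pendant.
Qed.

(* [minn] has no unit in [nat], but [bigD1] only needs a commutative semigroup law. *)
HB.instance Definition _ := SemiGroup.isComLaw.Build nat minn minnA minnC.

Lemma spfloor_le_sp G K : wf K -> minor G K -> spfloor G <= sp K.
Proof.
move=> hK hGK; rewrite /spfloor; case: (ltnP (sp K) (sp G).+1) => hlt.
  by rewrite (bigD1 (Ordinal hlt)) ?geq_minl //; apply/asboolP; exists K.
apply: leq_trans (ltnW hlt).
apply: (big_ind (fun y => y <= sp G)) => [//|x y hx _|i _].
  exact: leq_trans (geq_minl x y) hx.
by rewrite -ltnS.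
Qed.

Lemma spfloor_attained G : wf G -> exists K, [/\ wf K, minor G K & sp K = spfloor G].
Proof.
move=> hG; rewrite /spfloor.
apply: (big_ind (fun y => exists K, [/\ wf K, minor G K & sp K = y])).
- by exists G; split => //; apply: minor_refl.
- by move=> x y hx hy; rewrite /minn; case: ltnP.
- by move=> k /asboolP[K [? [? ?]]]; exists K.
Qed.

Lemma spfloor_minor G G' : wf G' -> minor G G' -> spfloor G <= spfloor G'.
Proof.
move=> hG' hGG'; have [K [hK hG'K <-]] := spfloor_attained hG'.
exact: spfloor_le_sp hK (minor_trans hGG' hG'K).
Qed.

Theorem lemma2p3 (Gv : graph) (v : nat) :
  wf Gv -> 1 < nv Gv -> v < nv Gv -> isolated Gv v ->
  spfloor Gv = spfloor (del_vertex Gv v) /\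
  (forall H : graph, wf H -> minor (del_vertex Gv v) H ->
     spfloor (del_vertex Gv v) = sp H ->
     exists Hp : graph,
       [/\ wf Hp, nv Hp = (nv H).+1, spfloor Gv = sp Hp & minor Gv Hp]).
Proof.
move=> hw h1 hv hiso; set G := del_vertex Gv v.
have hG : wf G by apply: wf_del_vertex.
have G_Gv : minor G Gv := minor_of_step (ms_del_vertex h1 hv hiso).
have Gv_G1 : minor Gv (add_isolated G).
  exact/minor_of_step/ms_iso/iso_add_isolated_del_vertex.
have extend H : wf H -> minor G H ->
    exists Hp, [/\ wf Hp, nv Hp = (nv H).+1, sp Hp <= sp H & minor Gv Hp].
  move=> hH /(minor_add_isolated_sp_le hH)[Hp [? ? ? hm]].
  by exists Hp; split => //; apply: minor_trans Gv_G1 hm.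
have floor_eq : spfloor Gv = spfloor G.
  apply/eqP; rewrite eqn_leq (spfloor_minor hw G_Gv) andbT.
  have [K [hK hGK <-]] := spfloor_attained hG.
  have [Hp [hHp _ hsp hm]] := extend K hK hGK.
  exact: leq_trans (spfloor_le_sp hHp hm) hsp.
split=> // H hH hGH hfloor.
have [Hp [hHp hn hsp hm]] := extend H hH hGH.
by exists Hp; split => //; apply/eqP; rewrite eqn_leq spfloor_le_sp //= floor_eq hfloor.
Qed.
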